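(* Let $k\ge 2$ be an integer and $a>0$. Let $L=L_a$ be the $k\times k$ lower bidiagonal matrix with all diagonal entries equal to $a$, all entries directly below the diagonal equal to $-a$, and all other entries $0$. (This is the reduced graph Laplacian of the hierarchical-leadership flock $[0,1,\dots,k]$ in which each agent $i>0$ is led only by agent $i-1$, at an instant when $a_{i,i-1}=a$ for all $i>0$.) Then the smallest eigenvalue of $L$ is $\xi=a$, but there exists no inner product $\langle\cdot,\cdot\rangle$ on $\mathbb{R}^k$ such that \[\langle Lv,v\rangle\ge a\langle v,v\rangle\qquad\text{for all } v\in\mathbb{R}^k.\]
   Context: The reduced Laplacian of a flock $[0,1,\dots,k]$ with connectivity coefficients $a_{ij}\ge 0$ is the restriction of $D-K$ (with $K=(a_{ij})_{0\le i,j\le k}$, $D=\mathrm{diag}(d_0,\dots,d_k)$, $d_i=\sum_j a_{ij}$) to the coordinates $1,\dots,k$; for the chain described in the claim it is exactly the matrix $L_a$ given there. *)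

From mathcomp Require Import all_boot all_order all_algebra.
Set Implicit Arguments. Unset Strict Implicit. Unset Printing Implicit Defensive.
Import Order.TTheory GRing.Theory Num.Theory.
Local Open Scope ring_scope.

Definition Lmat (R : ringType) (k : nat) (a : R) : 'M[R]_k :=
  \matrix_(i < k, j < k)
    (if nat_of_ord i == nat_of_ord j then a
     else if nat_of_ord i == (nat_of_ord j).+1 then - a else 0).

Definition is_inner_product (R : realFieldType) (k : nat)
    (ip : 'cV[R]_k -> 'cV[R]_k -> R) : Prop :=
  (forall u v, ip u v = ip v u) /\
  (forall (c : R) u v w, ip (c *: u + v) w = c * ip u w + ip v w) /\
  (forall v, v != 0 -> 0 < ip v v).

From mathcomp Require Import all_boot all_order all_algebra.
Set Implicit Arguments. Unset Strict Implicit. Unset Printing Implicit Defensive.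
Import Order.TTheory GRing.Theory Num.Theory.
Local Open Scope ring_scope.

(* L_a is lower triangular with constant diagonal a, so a is its only
   eigenvalue.  For the inequality, N := L_a - a is nilpotent and maps the
   (k-1)-st basis vector e to a nonzero multiple of the last one f, which N
   kills.  Any inner product with <L v, v> >= a <v, v> would make N accretive,
   <N v, v> >= 0; but for v = t f + e we get N v = N e, and t can be chosen to
   make <N e, v> negative because <N e, N e> > 0. *)

Lemma eigenvalue_trig_mx (F : fieldType) (n : nat) (A : 'M[F]_n) (x : F) :
  is_trig_mx A -> eigenvalue A x = [exists i, A i i == x].
Proof.
move=> trigA; rewrite eigenvalue_root_char char_poly_trig // /root.
rewrite horner_prod prodf_seq_eq0; apply/hasP/existsP.
  by case=> i _; rewrite !hornerE subr_eq0 eq_sym; exists i.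
by case=> i Aii; exists i; rewrite ?mem_index_enum //= !hornerE subr_eq0 eq_sym.
Qed.

Lemma Lmat_trig (R : nzRingType) (k : nat) (a : R) : is_trig_mx (Lmat k a).
Proof.
apply/is_trig_mxP => i j lt_ij; rewrite !mxE.
by rewrite (ltn_eqF lt_ij) (ltn_eqF (ltn_trans lt_ij (ltnSn _))).
Qed.

Lemma eigenvalue_Lmat (F : fieldType) (k : nat) (a x : F) : (0 < k)%N ->
  eigenvalue (Lmat k a) x = (x == a).
Proof.
move=> k_gt0; rewrite eigenvalue_trig_mx ?Lmat_trig //.
apply/existsP/eqP => [[i] | ->]; first by rewrite mxE eqxx eq_sym => /eqP.
by exists (Ordinal k_gt0); rewrite mxE eqxx.
Qed.

Lemma Lmat_sub_scalarE (R : nzRingType) (k : nat) (a : R) :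
  Lmat k a - a%:M =
  \matrix_(i, j) (if nat_of_ord i == (nat_of_ord j).+1 then - a else 0).
Proof.
apply/matrixP => i j; rewrite !mxE -val_eqE.
case: eqP => [ij | _]; last by rewrite subr0.
by rewrite mulr1n subrr ij (ltn_eqF (ltnSn _)).
Qed.

Lemma Lmat_sub_scalar_delta (R : nzRingType) (k : nat) (a : R) (j : 'I_k.+1) :
  (Lmat k.+1 a - a%:M) *m (delta_mx j 0 : 'cV_k.+1) =
  if (j < k)%N then - a *: delta_mx (inord j.+1) 0 else 0.
Proof.
rewrite -colE Lmat_sub_scalarE; apply/matrixP => i l; rewrite (ord1 l) !mxE.
case: ltnP => [j_lt_k | k_le_j]; rewrite !mxE; last first.
  by rewrite (ltn_eqF (leq_trans (ltn_ord i) (k_le_j : (k < j.+1)%N))).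
by rewrite eqxx andbT -val_eqE /= inordK // mulr_natr; case: eqP.
Qed.

Section InnerProduct.

Variables (R : realFieldType) (k : nat) (ip : 'cV[R]_k -> 'cV[R]_k -> R).
Hypothesis ip_inner : is_inner_product ip.

Lemma ip_sym u v : ip u v = ip v u.
Proof. by case: ip_inner. Qed.

Lemma ip_lin c u v w : ip (c *: u + v) w = c * ip u w + ip v w.
Proof. by case: ip_inner => _ [->]. Qed.

Lemma ip_gt0 v : v != 0 -> 0 < ip v v.
Proof. by case: ip_inner => _ [_ /(_ v)]. Qed.

Lemma ip0l w : ip 0 w = 0.
Proof.
apply/eqP; have := ip_lin 1 0 0 w; rewrite scale1r addr0 mul1r => /eqP.
by rewrite -subr_eq subrr eq_sym.
Qed.

Lemma ipZl c u w : ip (c *: u) w = c * ip u w.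
Proof. by rewrite -[c *: u]addr0 ip_lin ip0l addr0. Qed.

Lemma ipDl u v w : ip (u + v) w = ip u w + ip v w.
Proof. by have := ip_lin 1 u v w; rewrite scale1r mul1r. Qed.

Lemma ip_mul_sub_scalar (A : 'M[R]_k) (a : R) v :
  ip ((A - a%:M) *m v) v = ip (A *m v) v - a * ip v v.
Proof.
by rewrite mulmxBl mul_scalar_mx ipDl -scaleNr ipZl mulNr.
Qed.

Lemma not_accretive_of_nilpotent_image (N : 'M[R]_k) (e : 'cV[R]_k) :
  N *m (N *m e) = 0 -> N *m e != 0 -> ~ (forall v, 0 <= ip (N *m v) v).
Proof.
move=> NNe0 Ne_neq0 accN.
set f := N *m e in NNe0 Ne_neq0.
have f_gt0 := ip_gt0 Ne_neq0.
(* The coefficient of f makes <f, v> = -1. *)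
pose v := (- (1 + ip f e) / ip f f) *: f + e.
have Nv : N *m v = f by rewrite /v mulmxDr -scalemxAr NNe0 scaler0 add0r.
have := accN v; rewrite Nv ip_sym ip_lin mulfVK ?gt_eqF //.
by rewrite (ip_sym e) opprD addrNK oppr_ge0 ler10.
Qed.

End InnerProduct.

Theorem theorem1 (R : realFieldType) (k : nat) (a : R) :
  (2 <= k)%N -> 0 < a ->
  (eigenvalue (Lmat k a) a /\ (forall x : R, eigenvalue (Lmat k a) x -> a <= x)) /\
  ~ (exists ip : 'cV[R]_k -> 'cV[R]_k -> R,
       is_inner_product ip /\
       (forall v : 'cV[R]_k, a * ip v v <= ip (Lmat k a *m v) v)).
Proof.
case: k => [|[|m]] // _ a_gt0.
split.
  rewrite eigenvalue_Lmat // eqxx; split=> // x.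
  by rewrite eigenvalue_Lmat // => /eqP ->.
move=> [ip [ip_inner Lv_ge]].
pose N := Lmat m.+2 a - a%:M; pose e : 'cV[R]_m.+2 := delta_mx (inord m) 0.
have Ne : N *m e = - a *: delta_mx ord_max 0.
  rewrite Lmat_sub_scalar_delta inordK // ltnSn.
  by congr (_ *: delta_mx _ _); apply/val_inj; rewrite /= inordK.
have NNe : N *m (N *m e) = 0.
  by rewrite Ne -scalemxAr Lmat_sub_scalar_delta ltnn scaler0.
have Ne_neq0 : N *m e != 0.
  rewrite Ne scaler_eq0 oppr_eq0 (gt_eqF a_gt0) /=.
  by apply/eqP => /matrixP /(_ ord_max 0); rewrite !mxE !eqxx; apply/eqP/oner_neq0.
have accN v : 0 <= ip (N *m v) v by rewrite ip_mul_sub_scalar // subr_ge0 Lv_ge.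
exact: (not_accretive_of_nilpotent_image ip_inner NNe Ne_neq0 accN).
Qed.
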